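(* Let $G$ be a graph such that each block of $G$ has a $(w,p)$-good tree decomposition. Then $G$ has a $(w,p+1)$-good tree decomposition.
   Context: A block of $G$ is a maximal 2-connected subgraph, the subgraph induced by the endpoints of a bridge, or the subgraph induced by an isolated vertex. A tree decomposition of $G$ is a family $(B_x\subseteq V(G): x\in V(T))$ indexed by the nodes of a tree $T$ such that each edge of $G$ has both endpoints in some bag and, for each $v\in V(G)$, the nodes $x$ with $v\in B_x$ induce a non-empty connected subtree $T[v]$ of $T$; its width is the maximum bag size minus 1. Pathwidth $\operatorname{pw}$ is the minimum width of a tree decomposition indexed by a path. A tree decomposition is $(w,p)$-good if its width is at most $w$ and $\operatorname{pw}(T[v])\le p$ for every $v\in V(G)$. *)

(* Finite simple graphs as symmetric irreflexive relations
   on a finType; subgraphs induced on a vertex set S : {set V}. *)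
From mathcomp Require Import all_boot.
Set Implicit Arguments. Unset Strict Implicit. Unset Printing Implicit Defensive.

Section Graphs.
Variable V : finType.
Variable e : rel V.

Definition simple_graph := symmetric e /\ irreflexive e.

Definition induced (S : {set V}) : rel V :=
  fun x y => [&& x \in S, y \in S & e x y].

Definition connected_in (S : {set V}) : Prop :=
  S != set0 /\ forall x y, x \in S -> y \in S -> connect (induced S) x y.

Definition two_connected (S : {set V}) : Prop :=
  3 <= #|S| /\ connected_in S /\ forall v, v \in S -> connected_in (S :\ v).

Definition max_two_connected (S : {set V}) : Prop :=
  two_connected S /\ forall S' : {set V}, S \subset S' -> two_connected S' -> S' = S.

Definition bridge (u v : V) : Prop :=
  e u v /\
  ~~ connect (fun x y => e x y && ([set x; y] != [set u; v])) u v.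

Definition isolated (v : V) : Prop := forall u, ~~ e v u.

Definition block (S : {set V}) : Prop :=
  max_two_connected S
  \/ (exists u v, bridge u v /\ S = [set u; v])
  \/ (exists v, isolated v /\ S = [set v]).

Definition tree_rel : Prop :=
  connected_in [set: V] /\ forall c : seq V, ucycle e c -> size c < 3.

End Graphs.

Definition is_decomp (V : finType) (e : rel V) (S : {set V})
    (I : finType) (te : rel I) (B : I -> {set V}) : Prop :=
  (forall x, B x \subset S) /\
  (forall u v, u \in S -> v \in S -> e u v -> exists x, (u \in B x) && (v \in B x)) /\
  (forall v, v \in S -> connected_in te [set x | v \in B x]).

Definition width_le (V I : finType) (B : I -> {set V}) (w : nat) : Prop :=
  forall x, #|B x| <= w.+1.

Definition path_rel (n : nat) : rel 'I_n.+1 :=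
  fun i j => (i.+1 == j :> nat) || (j.+1 == i :> nat).

Definition pw_le (V : finType) (e : rel V) (S : {set V}) (p : nat) : Prop :=
  exists (n : nat) (B : 'I_n.+1 -> {set V}),
    is_decomp e S (@path_rel n) B /\ width_le B p.

Definition good_decomp (V : finType) (e : rel V) (S : {set V}) (w p : nat) : Prop :=
  exists (I : finType) (te : rel I) (B : I -> {set V}),
    simple_graph te /\ tree_rel te /\
    is_decomp e S te B /\ width_le B w /\
    (forall v, v \in S -> pw_le te [set x | v \in B x] p).

From mathcomp Require Import all_boot zify.
Set Implicit Arguments. Unset Strict Implicit. Unset Printing Implicit Defensive.

(* Induction on path-closed vertex sets U: whenever some edges of G connect
   two vertices of U, the same edges inside G[U] already connect them.  Then a
   connected G[U] without cut vertex is a block of G.  Otherwise U is the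
   union of two smaller path-closed sets U1, U2 that are disjoint or meet only
   in a cut vertex v of G[U], which is no cut vertex of G[U1].  The
   decompositions of both sides are glued by an edge between a node of T1[v]
   and a node y2 of T2[v], so T[v] is T1[v] and T2[v] joined by that edge.
   The invariant is that every T[u] has a path decomposition of width p+1
   with one node in all bags, and pathwidth at most p when u is no cut
   vertex.  For the glued T[v], append to the decomposition of T2[v] centered
   at y2 the bags of a width-p decomposition of T1[v], each enlarged by y2. *)

Lemma connect_homo (T T' : finType) (r : rel T) (r' : rel T') (f : T -> T') :
  (forall x y, r x y -> connect r' (f x) (f y)) ->
  forall x y, connect r x y -> connect r' (f x) (f y).
Proof.
move=> fr x y /connectP [s]; elim: s x => [|z s IHs] x /=; first by move=> _ ->.
by case/andP=> /fr xz zs yE; apply: connect_trans xz (IHs z zs yE).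
Qed.

Section InducedConnectivity.
Variables (T : finType) (r : rel T).

Lemma induced_sym (S : {set T}) : symmetric r -> symmetric (induced r S).
Proof. by move=> sr x y; rewrite /induced sr andbCA. Qed.

Lemma connect_induced_setT : connect (induced r setT) =2 connect r.
Proof.
move=> x y; apply/idP/idP; apply: connect_sub => {}x {}y rxy; apply: connect1;
  by move: rxy; rewrite /induced !inE.
Qed.

Lemma connect_induced_subset (X Y : {set T}) : X \subset Y ->
  subrel (connect (induced r X)) (connect (induced r Y)).
Proof.
move=> XY; apply: connect_sub => x y /and3P [xX yX rxy]; apply: connect1.
by rewrite /induced (subsetP XY x xX) (subsetP XY y yX).
Qed.

Lemma connect_first_step x y : connect r x y -> x != y ->
  exists2 z, r x z & connect r z y.
Proof.
case/connectP=> [[|z s]] /=; first by move=> _ ->; rewrite eqxx.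
by case/andP=> rxz zs yE _; exists z => //; apply/connectP; exists s.
Qed.

(* Retract [Y] onto [X] by sending [Y :\: X] to [x0]. *)
Lemma connect_induced_retract (X Y : {set T}) x0 : X \subset Y ->
  (forall s t, s \in X -> t \in Y :\: X -> r s t || r t s -> s = x0) ->
  forall x y, x \in X -> y \in X ->
  connect (induced r Y) x y -> connect (induced r X) x y.
Proof.
move=> XY cross x y xX yX.
pose x1 := if x0 \in X then x0 else x.
have cross1 s t : s \in X -> t \in Y :\: X -> r s t || r t s -> s = x1.
  by move=> sX tYX /(cross s t sX tYX) sx0; rewrite /x1 -sx0 sX.
pose f z := if z \in X then z else x1.
have fX z : z \in X -> f z = z by rewrite /f => ->.
move=> /(connect_homo (f := f)); rewrite !fX //; apply=> s t /and3P [sY tY rst].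
rewrite /f; case: ifP => sX; case: ifP => tX //.
- by apply: connect1; rewrite /induced sX tX.
- by rewrite (cross1 s t) // ?inE ?tX ?rst.
- by rewrite (cross1 t s) // ?inE ?sX ?rst ?orbT.
Qed.

Lemma connect_induced_exit (X P : {set T}) z b : connect (induced r X) z b ->
  z \notin P -> b \in P ->
  exists x y, [/\ x \in X :\: P, connect (induced r (X :\: P)) z x,
                  y \in X, y \in P & r x y].
Proof.
case/connectP=> s; elim: s z => [|q s IHs] z /=; first by move=> _ -> /negP.
case/andP=> /and3P [zX qX rzq] qs bE zP bP; case qP: (q \in P).
  by exists z, q; split; rewrite ?inE ?zP.
have [x [y [xXP zx yX yP rxy]]] := IHs q qs bE (negbT qP) bP.
exists x, y; split=> //; apply: connect_trans zx.
by apply: connect1; rewrite /induced !inE zP qP zX qX.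
Qed.

Lemma connected_in_setU (A B : {set T}) a b : symmetric r ->
  connected_in r A -> connected_in r B -> a \in A -> b \in B -> r a b ->
  connected_in r (A :|: B).
Proof.
move=> sr [_ cA] [_ cB] aA bB rab; split; first by apply/set0Pn; exists a; rewrite inE aA.
have from_a z : z \in A :|: B -> connect (induced r (A :|: B)) a z.
  case/setUP=> [zA|zB]; first exact: connect_induced_subset (subsetUl A B) _ _ (cA a z aA zA).
  apply: (connect_trans (y := b)); first by apply: connect1; rewrite /induced !inE aA bB rab orbT.
  exact: connect_induced_subset (subsetUr A B) _ _ (cB b z bB zB).
move=> x y xAB yAB; apply: connect_trans (from_a y yAB).
by rewrite (sym_connect_sym (induced_sym _ sr)); apply: from_a.
Qed.

End InducedConnectivity.

Lemma connected_in_imset (J J' : finType) (t : rel J) (t' : rel J') (h : J -> J') S :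
  injective h -> (forall a b, t' (h a) (h b) = t a b) ->
  connected_in t S -> connected_in t' (h @: S).
Proof.
move=> hinj ht [S0 cS]; split; first by rewrite imset_eq0.
move=> _ _ /imsetP [a aS ->] /imsetP [b bS ->].
apply: (connect_homo (r := induced t S)) (cS a b aS bS) => x y /and3P [xS yS txy].
by apply: connect1; rewrite /induced !mem_imset // ht xS yS.
Qed.

Section PathGraph.
Variable n : nat.

Lemma path_rel_sym : symmetric (@path_rel n).
Proof. by move=> i j; rewrite /path_rel orbC. Qed.

Lemma connected_path_rel_interval (S : {set 'I_n.+1}) (a b c : 'I_n.+1) :
  connected_in (@path_rel n) S -> a <= b <= c -> a \in S -> c \in S -> b \in S.
Proof.
case=> _ cS /andP [ab bc] aS cS'; have [<- //|bc'] := eqVneq c b.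
have [||x [y [/setDP [xS xb] _ _ yb rxy]]] :=
  connect_induced_exit (P := [set x : 'I_n.+1 | b < x]) (cS a c aS cS').
- by rewrite inE -leqNgt.
- by rewrite inE ltn_neqAle eq_sym bc' bc.
suff -> : b = x by [].
by apply: val_inj; move: rxy xb yb; rewrite /path_rel !inE /=; lia.
Qed.

Lemma interval_connected_path_rel (S : {set 'I_n.+1}) : S != set0 ->
  (forall a b c : 'I_n.+1, a <= b <= c -> a \in S -> c \in S -> b \in S) ->
  connected_in (@path_rel n) S.
Proof.
move=> S0 convS; split=> //.
suff up d (x y : 'I_n.+1) : y - x = d -> x <= y -> x \in S -> y \in S ->
    connect (induced (@path_rel n) S) x y.
  move=> x y xS yS; case: (leqP x y) => xy; first exact: up erefl xy xS yS.
  rewrite (sym_connect_sym (induced_sym _ path_rel_sym)).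
  exact: up erefl (ltnW xy) yS xS.
elim: d x => [|d IHd] x dE xy xS yS.
  by have -> : x = y by apply: val_inj => /=; lia.
have x1n : x.+1 < n.+1 by have := ltn_ord y; lia.
pose x1 := Ordinal x1n.
have x1S : x1 \in S by apply: (convS x x1 y) => //=; lia.
apply: connect_trans (IHd x1 _ _ x1S yS); rewrite /=; try lia.
by apply: connect1; rewrite /induced xS x1S /path_rel /= eqxx.
Qed.

End PathGraph.

Section PathDecomposition.
Variables (J : finType) (t : rel J).

(* Path decompositions indexed by [0..n] in nat (equivalent to [pw_le] by
   [pw_leP]), which are easy to concatenate. *)
Definition path_decomp (S : {set J}) (k n : nat) (f : nat -> {set J}) :=
  [/\ forall i, i <= n -> f i \subset S,
      forall i, i <= n -> #|f i| <= k.+1,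
      forall x y, x \in S -> y \in S -> t x y ->
        exists2 i, i <= n & (x \in f i) && (y \in f i),
      forall x, x \in S -> exists2 i, i <= n & x \in f i &
      forall x a b c, a <= b <= c -> c <= n -> x \in f a -> x \in f c -> x \in f b].

Lemma pw_leP S k : pw_le t S k <-> exists n f, path_decomp S k n f.
Proof.
split=> [[n [B [[BS [Bedge Bconn]] Bw]]]|[n [f [fS fw fedge fcover fconv]]]].
  exists n, (fun i => B (inord i)); split=> [i _|i _|x y xS yS txy|x xS|x a b c abc cn].
  - exact: BS.
  - exact: Bw.
  - have [i /andP [xi yi]] := Bedge x y xS yS txy.
    by exists i; rewrite ?inord_val ?xi ?yi // -ltnS.
  - have [/set0Pn [i]] := Bconn x xS; rewrite inE => xi _.
    by exists i; rewrite ?inord_val // -ltnS.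
  - move=> xa xc; have xS := subsetP (BS _) x xa.
    have inordK' i : i <= n -> (inord i : 'I_n.+1) = i :> nat by move=> ?; rewrite inordK.
    have [an bn] : a <= n /\ b <= n by lia.
    have := @connected_path_rel_interval n _ (inord a) (inord b) (inord c) (Bconn x xS).
    by rewrite !inE !inordK' //; apply.
exists n, (fun i : 'I_n.+1 => f i); split; last by move=> i; apply: fw; rewrite -ltnS.
split; first by move=> i; apply: fS; rewrite -ltnS.
split=> [x y xS yS txy|x xS].
  by have [i ilt xyi] := fedge x y xS yS txy; exists (Ordinal (ilt : i < n.+1)).
apply: interval_connected_path_rel => [|a b c abc]; last first.
  by rewrite !inE => xa xc; apply: (fconv x a b c) => //; rewrite -ltnS.
by have [i ilt xi] := fcover x xS; apply/set0Pn; exists (Ordinal (ilt : i < n.+1)); rewrite inE.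
Qed.

Definition centered_pw_le (S : {set J}) (k : nat) (c : J) :=
  exists n f, [/\ path_decomp S k n f, c \in S & forall i, i <= n -> c \in f i].

Lemma centered_pw_le_pw_le S k c : centered_pw_le S k c -> pw_le t S k.
Proof. by case=> n [f [fdec _ _]]; apply/pw_leP; exists n, f. Qed.

Lemma path_decomp_setU1 S k n f c : path_decomp S k n f ->
  path_decomp (c |: S) k.+1 n (fun i => c |: f i).
Proof.
case=> fS fw fedge fcover fconv.
have cover x : x \in c |: S -> exists2 i, i <= n & x \in c |: f i.
  case/setU1P=> [->|/fcover [i ilt xi]]; first by exists 0; rewrite ?setU11.
  by exists i; rewrite // setU1r.
split=> // [i ilt|i ilt|x y|x a b d abd dn].
- by rewrite setUS ?fS.
- by rewrite cardsU1; have := fw i ilt; case: (c \in f i); lia.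
- have [-> _ /cover [i ilt yi] _|xc] := eqVneq x c.
    by exists i; rewrite // setU11.
  have [-> /cover [i ilt xi] _ _|yc] := eqVneq y c.
    by exists i; rewrite // xi setU11.
  rewrite !inE (negbTE xc) (negbTE yc) /= => xS yS /(fedge x y xS yS) [i ilt /andP [xi yi]].
  by exists i; rewrite // !inE xi yi !orbT.
- by rewrite !inE; have [//|_ /=] := eqVneq x c; apply: fconv.
Qed.

Lemma pw_le_centered S k c : pw_le t S k -> c \in S -> centered_pw_le S k.+1 c.
Proof.
case/pw_leP=> n [f fdec] cS; exists n, (fun i => c |: f i).
have cSS : c |: S = S by apply/setUidPr; rewrite sub1set.
by split=> [|//|i _]; rewrite ?setU11 // -{1}cSS; apply: path_decomp_setU1.
Qed.

Definition cat_bags (n1 : nat) (g1 g2 : nat -> {set J}) i :=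
  if i <= n1 then g1 i else g2 (i - n1.+1).

Lemma cat_bags_l n1 g1 g2 i : i <= n1 -> cat_bags n1 g1 g2 i = g1 i.
Proof. by rewrite /cat_bags => ->. Qed.

Lemma cat_bags_r n1 g1 g2 i : cat_bags n1 g1 g2 (n1.+1 + i) = g2 i.
Proof. by rewrite /cat_bags ifN ?addKn // -ltnNge ltn_addr. Qed.

Lemma path_decomp_cat S1 S2 k n1 n2 g1 g2 :
  path_decomp S1 k n1 g1 -> path_decomp S2 k n2 g2 ->
  (forall x, x \in S1 -> x \in S2 -> (x \in g1 n1) && (x \in g2 0)) ->
  (forall x y, x \in S1 -> y \in S2 -> t x y || t y x -> (x \in S2) || (y \in S1)) ->
  path_decomp (S1 :|: S2) k (n1.+1 + n2) (cat_bags n1 g1 g2).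
Proof.
case=> g1S g1w g1edge g1cover g1conv [g2S g2w g2edge g2cover g2conv] common cross.
have shift i : n1 < i -> i = n1.+1 + (i - n1.+1) by lia.
split=> [i ilt|i ilt|x y|x|x a b c /andP [ab bc] cn].
- rewrite /cat_bags; case: ifP => [/g1S|_]; first by move/subset_trans; apply; exact: subsetUl.
  by apply: subset_trans (g2S _ _) (subsetUr _ _); lia.
- by rewrite /cat_bags; case: ifP => [/g1w //|_]; apply: g2w; lia.
- move=> /setUP xS /setUP yS txy.
  have [/andP [xS1 yS1]|] := boolP ((x \in S1) && (y \in S1)).
    have [i ilt xyi] := g1edge x y xS1 yS1 txy.
    by exists i; rewrite ?cat_bags_l //; lia.
  have [/andP [xS2 yS2] _|] := boolP ((x \in S2) && (y \in S2)).
    have [i ilt xyi] := g2edge x y xS2 yS2 txy.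
    by exists (n1.+1 + i); rewrite ?cat_bags_r //; lia.
  case: xS yS => xS [] yS; rewrite ?xS ?yS ?andbT //= => /negbTE yS' /negbTE xS'.
  + by have := cross x y xS yS; rewrite txy xS' yS' => /(_ isT).
  + by have := cross y x yS xS; rewrite txy orbT xS' yS' => /(_ isT).
- case/setUP=> [/g1cover [i ilt xi]|/g2cover [i ilt xi]].
    by exists i; rewrite ?cat_bags_l //; lia.
  by exists (n1.+1 + i); rewrite ?cat_bags_r //; lia.
have [an1|n1a] := leqP a n1; have [cn1|n1c] := leqP c n1.
- by rewrite !cat_bags_l ?(leq_trans bc) //; apply: g1conv; rewrite ?ab ?bc.
- rewrite cat_bags_l // (shift c n1c) cat_bags_r => xa xc.
  have cn2 : c - n1.+1 <= n2 by lia.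
  have /andP [xn1 x0] := common x (subsetP (g1S a an1) x xa) (subsetP (g2S _ cn2) x xc).
  have [bn1|n1b] := leqP b n1.
    by rewrite cat_bags_l //; apply: (g1conv x a b n1) => //; rewrite ab.
  rewrite (shift b n1b) cat_bags_r; apply: (g2conv x 0 _ (c - n1.+1)) => //; lia.
- lia.
- rewrite (shift a n1a) (shift b (leq_trans n1a ab)) (shift c n1c) !cat_bags_r.
  by apply: g2conv; lia.
Qed.

Lemma centered_pw_le_cat A B k c : centered_pw_le A k.+1 c -> pw_le t B k ->
  [disjoint A & B] -> (forall x y, x \in A -> y \in B -> t x y || t y x -> x = c) ->
  centered_pw_le (A :|: B) k.+1 c.
Proof.
case=> n1 [g1 [g1dec cA cg1]] /pw_leP [n2 [g2 /(path_decomp_setU1 c) g2dec]] AB cross.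
exists (n1.+1 + n2), (cat_bags n1 g1 (fun i => c |: g2 i)); split.
- rewrite -(setUidPl (_ : [set c] \subset A)) ?sub1set // -setUA.
  apply: path_decomp_cat => // [x xA|x y xA].
    case/setU1P=> [->|xB]; first by rewrite cg1 ?setU11.
    by rewrite (disjointFr AB xA) in xB.
  case/setU1P=> [->|yB]; first by rewrite cA orbT.
  by move/(cross x y xA yB) ->; rewrite setU11.
- by rewrite inE cA.
- move=> i ilt; rewrite /cat_bags; case: ifP => [/cg1 //|_]; exact: setU11.
Qed.

End PathDecomposition.

Section Transport.
Variables (J J' : finType) (t : rel J) (t' : rel J') (h : J -> J').
Hypothesis h_inj : injective h.
Hypothesis h_rel : forall a b, t' (h a) (h b) = t a b.

Lemma path_decomp_imset S k n f : path_decomp t S k n f ->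
  path_decomp t' (h @: S) k n (fun i => h @: f i).
Proof.
case=> fS fw fedge fcover fconv.
split=> [i ilt|i ilt|_ _ /imsetP [x xS ->] /imsetP [y yS ->]|_ /imsetP [x xS ->]|].
- exact/imsetS/fS.
- by rewrite card_imset ?fw.
- rewrite h_rel => /(fedge x y xS yS) [i ilt xyi].
  by exists i; rewrite ?mem_imset.
- by have [i ilt xi] := fcover x xS; exists i; rewrite ?mem_imset.
- move=> _ a b c abc cn /imsetP [x xa ->]; rewrite !mem_imset // => xc.
  exact: fconv abc cn xa xc.
Qed.

Lemma pw_le_imset S k : pw_le t S k -> pw_le t' (h @: S) k.
Proof.
by case/pw_leP=> n [f /path_decomp_imset fdec]; apply/pw_leP; exists n, (fun i => h @: f i).
Qed.

Lemma centered_pw_le_imset S k c :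
  centered_pw_le t S k c -> centered_pw_le t' (h @: S) k (h c).
Proof.
case=> n [f [/path_decomp_imset fdec cS cf]]; exists n, (fun i => h @: f i).
by split=> // [|i ilt]; rewrite mem_imset ?cf.
Qed.

End Transport.

Section GlueTrees.
Variables (I1 I2 : finType) (t1 : rel I1) (t2 : rel I2) (y1 : I1) (y2 : I2).

Definition glue : rel (I1 + I2) := fun x y =>
  match x, y with
  | inl a, inl b => t1 a b
  | inr a, inr b => t2 a b
  | inl a, inr b | inr b, inl a => (a == y1) && (b == y2)
  end.

Lemma glue_sym : symmetric t1 -> symmetric t2 -> symmetric glue.
Proof. by move=> s1 s2 [a|a] [b|b] /=. Qed.

Lemma glue_simple : simple_graph t1 -> simple_graph t2 -> simple_graph glue.
Proof. by case=> s1 i1 [s2 i2]; split; [exact: glue_sym | case=> a /=]. Qed.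

Lemma glue_connected : symmetric t1 -> symmetric t2 ->
  tree_rel t1 -> tree_rel t2 -> connected_in glue setT.
Proof.
move=> s1 s2 [[_ c1] _] [[_ c2] _]; split; first by apply/set0Pn; exists (inl y1).
have to_y1 z : connect glue z (inl y1).
  case: z => [a|b].
    apply: (connect_homo (r := t1)) => [a' b' ?|]; first exact: connect1.
    by rewrite -connect_induced_setT c1.
  apply: (connect_trans (y := inr y2)); last by apply: connect1; rewrite /= !eqxx.
  apply: (connect_homo (r := t2)) => [a' b' ?|]; first exact: connect1.
  by rewrite -connect_induced_setT c2.
move=> x y _ _; rewrite connect_induced_setT; apply: connect_trans (to_y1 x) _.
by rewrite (sym_connect_sym (glue_sym s1 s2)).
Qed.

Definition is_left (z : I1 + I2) := if z is inl _ then true else false.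

Lemma glue_side a b : glue a b -> a != inl y1 -> b != inl y1 -> is_left b = is_left a.
Proof. by case: a b => a [] b //= /andP [/eqP -> _]; rewrite eqxx. Qed.

Lemma glue_path_side a s : path glue a s -> inl y1 \notin a :: s ->
  all [pred z | is_left z == is_left a] s.
Proof.
elim: s a => [//|b s IHs] a /= /andP [ab bs]; rewrite !inE !negb_or => /and3P [ay1 by1 y1s].
have sideb : is_left b = is_left a by apply: glue_side; rewrite // eq_sym.
by rewrite sideb eqxx /= -sideb; apply: IHs; rewrite // inE negb_or by1.
Qed.

Lemma glue_y1_right z : ~~ is_left z -> glue z (inl y1) || glue (inl y1) z -> z = inr y2.
Proof. by case: z => // b _; rewrite orbb => /andP [_ /eqP ->]. Qed.

(* A cycle through [inl y1] leaving the first tree has to enter and return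
   through the only crossing edge, so it visits [inr y2] twice. *)
Lemma glue_ucycle_side c : ucycle glue c -> 2 < size c ->
  all is_left c || all (predC is_left) c.
Proof.
have one_side a s : all [pred z | is_left z == is_left a] s ->
    all is_left (a :: s) || all (predC is_left) (a :: s).
  move/allP=> sa; apply/orP; case la: (is_left a); [left|right];
    by rewrite /= la; apply/allP => z /sa /eqP /= zl; rewrite /= zl la.
case y1c: (inl y1 \in c); last first.
  case: c y1c => [//|a s] /negbT y1c /andP [+ _] _.
  by rewrite /cycle rcons_path => /andP [pas _]; apply/one_side/glue_path_side.
case: (rot_to y1c) => i s rotc; rewrite -(rot_ucycle i) -(size_rot i) rotc.
rewrite -!(eq_all_r (mem_rot i c)) rotc.
case: s {rotc} => [//|a s] /andP [cyc /andP [y1_fresh /andP [a_fresh _]]] size_s.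
move: cyc; rewrite /cycle rcons_path => /andP [/andP [y1_a pas] last_y1].
have := glue_path_side pas y1_fresh; case la: (is_left a) => sides.
  by rewrite /= la; apply/orP; left; apply/allP=> z /(allP sides) /= /eqP ->.
have la' : ~~ is_left (last a s).
  by have /predU1P [->|/(allP sides) /eqP /= ->] := mem_last a s; apply/negbT.
have a_y2 := glue_y1_right (negbT la) (introT orP (or_intror y1_a)).
have := glue_y1_right la' (introT orP (or_introl last_y1)); rewrite -a_y2.
case: s size_s a_fresh {y1_fresh pas sides last_y1 la'} => // b s _ a_fresh lE.
by case/negP: a_fresh; rewrite -[X in X \in _]lE; exact: (mem_last b s).
Qed.

Lemma all_is_left c : all is_left c -> exists s, c = map inl s.
Proof.
elim: c => [|[a|//] c IHc] /=; first by exists [::].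
by case/IHc=> s ->; exists (a :: s).
Qed.

Lemma all_is_right c : all (predC is_left) c -> exists s, c = map inr s.
Proof.
elim: c => [|[//|b] c IHc] /=; first by exists [::].
by case/IHc=> s ->; exists (b :: s).
Qed.

Lemma ucycle_glue_inl s : ucycle glue (map inl s) = ucycle t1 s.
Proof. by rewrite /ucycle cycle_map map_inj_uniq // => ? ? []. Qed.

Lemma ucycle_glue_inr s : ucycle glue (map inr s) = ucycle t2 s.
Proof. by rewrite /ucycle cycle_map map_inj_uniq // => ? ? []. Qed.

Lemma glue_tree : symmetric t1 -> symmetric t2 ->
  tree_rel t1 -> tree_rel t2 -> tree_rel glue.
Proof.
move=> s1 s2 tr1 tr2; split; first exact: glue_connected.
move: tr1 tr2 => [_ acyc1] [_ acyc2].
move=> c uc; rewrite ltnNge; apply/negP => c3.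
case/orP: (glue_ucycle_side uc c3) => [/all_is_left|/all_is_right] [s cE].
  by move: c3 uc; rewrite cE size_map ucycle_glue_inl ltnNge => /negP + /acyc1.
by move: c3 uc; rewrite cE size_map ucycle_glue_inr ltnNge => /negP + /acyc2.
Qed.

End GlueTrees.

Section Graph.
Variables (V : finType) (e : rel V).
Hypothesis se : symmetric e.
Hypothesis ie : irreflexive e.

Definition path_closed (U : {set V}) := forall F : rel V, subrel F e ->
  forall x y, x \in U -> y \in U -> connect F x y -> connect (induced F U) x y.

Lemma path_closedT : path_closed setT.
Proof. by move=> F _ x y _ _; rewrite connect_induced_setT. Qed.

Definition separated (P Q : {set V}) :=
  forall s t, s \in P :\: Q -> t \in Q :\: P -> ~~ e s t.

Lemma separated_sym P Q : separated P Q -> separated Q P.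
Proof. by move=> sPQ s t sQ tP; rewrite se; apply: sPQ. Qed.

Lemma separated_edge P Q x y : separated P Q -> x \in P :|: Q -> y \in P :|: Q ->
  e x y -> (x \in P) && (y \in P) || (x \in Q) && (y \in Q).
Proof.
move=> sPQ + + exy; rewrite !inE.
case xP: (x \in P); case yP: (y \in P); case xQ: (x \in Q); case yQ: (y \in Q) => //= _ _.
  by have := sPQ x y; rewrite !inE xP xQ yP yQ exy => /(_ isT isT).
by have := sPQ y x; rewrite !inE xP xQ yP yQ se exy => /(_ isT isT).
Qed.

Lemma separated_cross P Q v s t : separated P Q -> P :&: Q \subset [set v] ->
  s \in P -> t \in Q :\: P -> e s t -> s = v.
Proof.
move=> sPQ PQv sP tQP est; case sQ: (s \in Q).
  by apply/set1P; apply: (subsetP PQv); rewrite inE sP sQ.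
by have := sPQ s t; rewrite inE sP sQ est => /(_ isT tQP).
Qed.

Lemma connect_separated_part F P Q v : subrel F e ->
  separated P Q -> P :&: Q \subset [set v] ->
  forall x y, x \in P -> y \in P ->
  connect (induced F (P :|: Q)) x y -> connect (induced F P) x y.
Proof.
move=> Fe sPQ PQv; apply: (connect_induced_retract (subsetUl P Q)) => s t sP.
rewrite setDUl setDv set0U => tQP /orP Fst.
by apply: separated_cross sPQ PQv sP tQP _; case: Fst => /Fe //; rewrite se.
Qed.

Lemma path_closed_part P Q v : separated P Q -> P :&: Q \subset [set v] ->
  path_closed (P :|: Q) -> path_closed P.
Proof.
move=> sPQ PQv closedPQ F Fe x y xP yP cxy.
apply: (connect_separated_part Fe sPQ PQv xP yP).
by apply: closedPQ; rewrite ?inE ?xP ?yP.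
Qed.

Definition noncut (U : {set V}) u := U :\ u = set0 \/ connected_in e (U :\ u).

Lemma noncut_part P Q v u : separated P Q -> P :&: Q \subset [set v] ->
  u \in P -> u \notin Q -> noncut (P :|: Q) u -> noncut P u.
Proof.
move=> sPQ PQv uP uQ ncut.
have [P0|/set0Pn [z /setD1P [zu zP]]] := eqVneq (P :\ u) set0; first by left.
have [PQ'0|[_ cPQ']] := ncut.
  by move/setP: PQ'0 => /(_ z); rewrite !inE zu zP.
have PQ' : (P :|: Q) :\ u = (P :\ u) :|: Q.
  by apply/setP => x; rewrite !inE; case: (x =P u) => // ->; rewrite (negbTE uQ).
have sPQ' : separated (P :\ u) Q.
  move=> s t /setDP [/setD1P [_ sP] sQ] /setDP [tQ tP']; apply: sPQ; rewrite inE ?sP ?sQ //.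
  by rewrite tQ andbT; apply: contra tP' => tP; rewrite !inE tP (memPn uQ t tQ).
have PQv' : (P :\ u) :&: Q \subset [set v] by apply: subset_trans PQv; rewrite setSI ?subD1set.
right; split; first by apply/set0Pn; exists z; apply/setD1P.
move=> x y xP' yP'; apply: (connect_separated_part _ sPQ' PQv' xP' yP') => //.
by rewrite -PQ'; apply: cPQ'; rewrite PQ' inE ?xP' ?yP'.
Qed.

Definition component (X : {set V}) a := [set y in X | connect (induced e X) a y].

Lemma component_sub (X : {set V}) a : component X a \subset X.
Proof. by apply/subsetP => y; rewrite inE => /andP []. Qed.

Lemma component_self (X : {set V}) a : a \in X -> a \in component X a.
Proof. by move=> aX; rewrite inE aX connect0. Qed.

Lemma component_edge (X : {set V}) a s t : s \in component X a -> t \in X -> e s t ->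
  t \in component X a.
Proof.
rewrite !inE => /andP [sX a_s] tX est; rewrite tX.
by apply: connect_trans a_s (connect1 _); rewrite /induced sX tX.
Qed.

Lemma separated_component (X P Q : {set V}) a : P :\: Q \subset component X a ->
  Q :\: P \subset X :\: component X a -> separated P Q.
Proof.
move=> PQC QPX s t /(subsetP PQC) sC /(subsetP QPX) /setDP [tX tC].
by apply: contra tC; apply: component_edge.
Qed.

Lemma component_connected (X : {set V}) a : a \in X -> connected_in e (component X a).
Proof.
move=> aX; split; first by apply/set0Pn; exists a; apply: component_self.
move=> x y xC yC; have cxy : connect (induced e X) x y.
  move: xC yC; rewrite !inE => /andP [_ ax] /andP [_ ay]; apply: connect_trans ay.
  by rewrite (sym_connect_sym (induced_sym _ se)).
apply: (connect_induced_retract (x0 := a) (component_sub X a) _ xC yC cxy).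
move=> s t sC /setDP [tX tC] est; case/negP: tC; apply: (component_edge sC tX).
by case/orP: est; rewrite // se.
Qed.

Lemma component_of_connected (X : {set V}) a : connected_in e X -> a \in X ->
  component X a = X.
Proof.
case=> _ cX aX; apply/eqP; rewrite eqEsubset component_sub.
by apply/subsetP => y yX; rewrite inE yX cX.
Qed.

Definition disconnected (X : {set V}) := [exists a in X, component X a != X].

Lemma connected_in_component (X : {set V}) : X != set0 -> ~~ disconnected X -> connected_in e X.
Proof.
case/set0Pn=> a aX /exists_inPn /(_ a aX) /negPn /eqP <-.
exact: component_connected.
Qed.

Lemma path_closed_no_outer_path U F p q : path_closed U -> subrel F e ->
  (forall x y, x \in U -> y \in U -> ~~ F x y) ->
  p \in U -> q \in U -> p != q -> ~~ connect F p q.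
Proof.
move=> closedU Fe Fout pU qU pq; apply/negP => /(closedU F Fe p q pU qU) cpq.
have [z /and3P [_ zU Fpz] _] := connect_first_step cpq pq.
by rewrite (negbTE (Fout p z pU zU)) in Fpz.
Qed.

Lemma bridge_of_path_closed a b : path_closed [set a; b] -> a != b ->
  connected_in e [set a; b] -> bridge e a b.
Proof.
move=> closedU ab [_ cU].
have eab : e a b.
  have [z /and3P [_ zU eaz] _] := connect_first_step (cU a b (set21 a b) (set22 a b)) ab.
  by case/set2P: zU eaz => ->; rewrite ?ie.
split=> //; apply: (path_closed_no_outer_path closedU) => [x y /andP [] //|x y|||//].
- by case/set2P=> -> /set2P [] ->; rewrite ?ie ?eqxx ?andbF // setUC eqxx andbF.
- exact: set21.
- exact: set22.
Qed.

Section Maximality.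
Variables (U S : {set V}).
Hypothesis US : U \subset S.

Let outer x y := induced e S x y && ~~ ((x \in U) && (y \in U)).

Lemma outer_path_to x z b : x \in U -> connected_in e (S :\ x) -> z \in S :\: U -> b \in U :\ x ->
  exists2 p, p \in U :\ x & connect outer z p.
Proof.
move=> xU [_ cS'] /setDP [zS zU] /setD1P [bx bU].
have zS' : z \in S :\ x by rewrite !inE zS andbT; apply: contraNneq zU => ->.
have bS' : b \in S :\ x by rewrite !inE bx (subsetP US).
have [r [p [/setDP [rS' rU] zr /setD1P [px pS] pU erp]]] :=
  connect_induced_exit (cS' z b zS' bS') zU bU.
exists p; first by rewrite !inE px pU.
apply: connect_trans (connect1 (_ : outer r p)); last first.
  by rewrite /outer /induced (negbTE rU) (setD1P rS').2 pS erp.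
apply: connect_sub zr => s t /and3P [/setDP [/setD1P [_ sS] sU] /setDP [/setD1P [_ tS] tU] est].
by apply: connect1; rewrite /outer /induced sS tS est (negbTE sU).
Qed.

End Maximality.

Lemma max_two_connected_of_path_closed U : path_closed U -> two_connected e U ->
  max_two_connected e U.
Proof.
move=> closedU twoU; split=> // S US [_ [_ cutS]]; apply/eqP.
rewrite eqEsubset US andbT; apply/subsetP => z zS; apply/negPn/negP => zU.
have zSU : z \in S :\: U by rewrite inE zU zS.
have [U3 [[/set0Pn [a aU] _] _]] := twoU.
have [b bU'] : exists b, b \in U :\ a.
  by apply/set0Pn; rewrite -card_gt0; move: U3; rewrite (cardsD1 a U) aU; lia.
have [p1 /setD1P [p1a p1U] zp1] := outer_path_to US aU (cutS a (subsetP US a aU)) zSU bU'.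
have aU' : a \in U :\ p1 by rewrite !inE aU andbT eq_sym.
have [p2 /setD1P [p2p1 p2U] zp2] := outer_path_to US p1U (cutS p1 (subsetP US p1 p1U)) zSU aU'.
set F := fun x y => _ in zp1 zp2.
have Fsym : symmetric F by move=> x y; rewrite /F (induced_sym _ se) [(x \in U) && _]andbC.
have p12 : p1 != p2 by rewrite eq_sym.
have : connect F p1 p2 by apply: connect_trans zp2; rewrite (sym_connect_sym Fsym).
apply/negP; apply: (path_closed_no_outer_path closedU _ _ p1U p2U p12).
  by move=> x y /andP [/and3P []].
by move=> x y xU yU; rewrite /F xU yU andbF.
Qed.

Lemma block_of_path_closed U : path_closed U -> 1 < #|U| -> connected_in e U ->
  (forall u, u \in U -> connected_in e (U :\ u)) -> block e U.
Proof.
move=> closedU U_gt1 cU cutU.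
case: (ltngtP #|U| 2) => [U_lt2|U_gt2|/eqP /cards2P [a [b [ab UE]]]]; first by lia.
  by left; apply: max_two_connected_of_path_closed.
by right; left; exists a, b; split=> //; apply: bridge_of_path_closed; rewrite -?UE.
Qed.

End Graph.

Section Decomposition.
Variables (V : finType) (e : rel V) (w p : nat).
Hypothesis se : symmetric e.

Definition subtree (I : finType) (B : I -> {set V}) u := [set x | u \in B x].

Lemma subtree_eq0 (I : finType) (B : I -> {set V}) (U : {set V}) u :
  (forall x, B x \subset U) -> u \notin U -> subtree B u = set0.
Proof.
move=> BU uU; apply/setP => x; rewrite !inE; apply: contraNF uU; exact: subsetP.
Qed.

Definition centered_subtree (I : finType) (te : rel I) (B : I -> {set V}) (U : {set V}) u :=
  (exists c, centered_pw_le te (subtree B u) p.+1 c) /\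
  (noncut e U u -> pw_le te (subtree B u) p).

Definition centered_decomp (U : {set V}) :=
  exists (I : finType) (te : rel I) (B : I -> {set V}),
  [/\ simple_graph te, tree_rel te, is_decomp e U te B, width_le B w &
      forall u, u \in U -> centered_subtree te B U u].

Lemma centered_decomp_of_good U : good_decomp e U w p -> centered_decomp U.
Proof.
case=> I [te [B [tes [tet [dec [Bw Bpw]]]]]]; exists I, te, B; split=> // u uU.
have [/set0Pn [c cu] _] := dec.2.2 u uU.
split=> [|_]; last exact: Bpw.
by exists c; apply: pw_le_centered (Bpw u uU) cu.
Qed.

Lemma centered_decomp_small (U : {set V}) : #|U| <= 1 -> centered_decomp U.
Proof.
move=> U_le1; pose t0 (_ _ : unit) := false.
have t0_tree : tree_rel t0.
  split; last by case=> [|x s] //; rewrite /ucycle /cycle rcons_path andbF.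
  by split=> [|[] [] _ _]; [apply/set0Pn; exists tt | exact: connect0].
have pd1 k : path_decomp t0 [set tt] k 0 (fun _ => [set tt]).
  by split=> [i _|i _|[] [] _ _ _|[] _|[] a b c _ _]; rewrite ?cards1 ?inE //; exists 0.
have dec : is_decomp e U t0 (fun _ => U).
  split=> [_ //|]; split=> [u u' uU u'U _|u uU]; first by exists tt; rewrite uU u'U.
  by split=> [|[] [] _ _]; [apply/set0Pn; exists tt; rewrite inE | exact: connect0].
exists unit, t0, (fun _ => U); split=> // [_|]; first exact: leq_trans U_le1 _.
move=> u uU; rewrite /centered_subtree.
have -> : subtree (fun _ => U) u = [set tt] by apply/setP => -[]; rewrite !inE uU.
split=> [|_]; last by apply/pw_leP; exists 0, (fun _ => [set tt]).
by exists tt, 0, (fun _ => [set tt]); split; rewrite ?inE.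
Qed.

Lemma inl_notin_imset_inr (A B : finType) (S : {set B}) (a : A) : inl a \notin inr @: S.
Proof. by apply/imsetP => -[]. Qed.

Lemma inr_notin_imset_inl (A B : finType) (S : {set A}) (b : B) : inr b \notin inl @: S.
Proof. by apply/imsetP => -[]. Qed.

Section Glue.
Variables (U1 U2 : {set V}) (v : V) (I1 I2 : finType) (t1 : rel I1) (t2 : rel I2).
Variables (B1 : I1 -> {set V}) (B2 : I2 -> {set V}) (y1 : I1) (y2 : I2).
Hypothesis sep12 : separated e U1 U2.
Hypothesis U12v : U1 :&: U2 \subset [set v].
Hypothesis dec1 : is_decomp e U1 t1 B1.
Hypothesis dec2 : is_decomp e U2 t2 B2.

Definition glue_bags (z : I1 + I2) := match z with inl a => B1 a | inr b => B2 b end.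

Lemma subtree_glue u :
  subtree glue_bags u = inl @: subtree B1 u :|: inr @: subtree B2 u.
Proof.
apply/setP => -[a|b]; rewrite inE in_setU ?(mem_imset _ _ inl_inj) ?(mem_imset _ _ inr_inj).
  by rewrite (negbTE (inl_notin_imset_inr _ _)) orbF inE.
by rewrite (negbTE (inr_notin_imset_inl _ _)) inE.
Qed.

Lemma glue_is_decomp : symmetric t1 -> symmetric t2 ->
  (v \in U1 -> v \in U2 -> (v \in B1 y1) && (v \in B2 y2)) ->
  is_decomp e (U1 :|: U2) (glue t1 t2 y1 y2) glue_bags.
Proof.
move=> s1 s2 yv; case: dec1 dec2 => [B1U [edge1 conn1]] [B2U [edge2 conn2]].
split; [|split].
- by case=> [a|b] /=; [apply: subset_trans (subsetUl _ _) | apply: subset_trans (subsetUr _ _)].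
- move=> u u' uU u'U euu'.
  case/orP: (separated_edge se sep12 uU u'U euu') => /andP [uUi u'Ui].
    by have [x uu'x] := edge1 u u' uUi u'Ui euu'; exists (inl x).
  by have [x uu'x] := edge2 u u' uUi u'Ui euu'; exists (inr x).
move=> u /setUP uU; rewrite -/(subtree glue_bags u) subtree_glue.
have conn1' x : x \in U1 -> connected_in (glue t1 t2 y1 y2) (inl @: subtree B1 x).
  by move/conn1; apply: connected_in_imset inl_inj _.
have conn2' x : x \in U2 -> connected_in (glue t1 t2 y1 y2) (inr @: subtree B2 x).
  by move/conn2; apply: connected_in_imset inr_inj _.
have [uU1|uU1] := boolP (u \in U1); have [uU2|uU2] := boolP (u \in U2).
- have uv : u = v by apply/set1P; apply: (subsetP U12v); rewrite inE uU1.
  subst u; case/andP: (yv uU1 uU2) => y1v y2v.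
  apply: (connected_in_setU (a := inl y1) (b := inr y2)).
  + exact: glue_sym.
  + exact: conn1'.
  + exact: conn2'.
  + by rewrite (mem_imset _ _ inl_inj) inE.
  + by rewrite (mem_imset _ _ inr_inj) inE.
  + by rewrite /= !eqxx.
- by rewrite (subtree_eq0 B2U uU2) imset0 setU0; apply: conn1'.
- by rewrite (subtree_eq0 B1U uU1) imset0 set0U; apply: conn2'.
- by case: uU => ?; [case/negP: uU1 | case/negP: uU2].
Qed.

Hypothesis ok1 : forall u, u \in U1 -> centered_subtree t1 B1 U1 u.
Hypothesis ok2 : forall u, u \in U2 -> centered_subtree t2 B2 U2 u.

Lemma glue_centered_subtree :
  (v \in U1 -> v \in U2 -> [/\ centered_pw_le t2 (subtree B2 v) p.+1 y2,
                              noncut e U1 v & ~ noncut e (U1 :|: U2) v]) ->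
  forall u, u \in U1 :|: U2 -> centered_subtree (glue t1 t2 y1 y2) glue_bags (U1 :|: U2) u.
Proof.
move=> vshared u /setUP uU; rewrite /centered_subtree subtree_glue.
case: dec1 dec2 => [B1U _] [B2U _].
have [uU1|uU1] := boolP (u \in U1); have [uU2|uU2] := boolP (u \in U2).
- have uv : u = v by apply/set1P; apply: (subsetP U12v); rewrite inE uU1.
  subst u; have [c2 ncut1 cut12] := vshared uU1 uU2; split=> [|/cut12 //].
  exists (inr y2); rewrite setUC; apply: centered_pw_le_cat.
  + by apply: (centered_pw_le_imset inr_inj _ c2).
  + by apply: (pw_le_imset inl_inj _ ((ok1 uU1).2 ncut1)).
  + rewrite -setI_eq0; apply/eqP/setP => -[a|b].
      by rewrite !inE (negbTE (inl_notin_imset_inr _ _)).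
    by rewrite !inE (negbTE (inr_notin_imset_inl _ _)) andbF.
  + by move=> _ _ /imsetP [b _ ->] /imsetP [a _ ->]; rewrite /= orbb => /andP [_ /eqP ->].
- rewrite (subtree_eq0 B2U uU2) imset0 setU0; have [[c c1] pw1] := ok1 uU1.
  split=> [|/(noncut_part se sep12 U12v uU1 uU2) /pw1 pw]; last first.
    by apply: (pw_le_imset inl_inj _ pw).
  by exists (inl c); apply: (centered_pw_le_imset inl_inj _ c1).
- rewrite (subtree_eq0 B1U uU1) imset0 set0U; have [[c c2] pw2] := ok2 uU2.
  rewrite setUC; split=> [|]; last first.
    have U21v : U2 :&: U1 \subset [set v] by rewrite setIC.
    move/(noncut_part se (separated_sym se sep12) U21v uU2 uU1)/pw2 => pw.
    by apply: (pw_le_imset inr_inj _ pw).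
  by exists (inr c); apply: (centered_pw_le_imset inr_inj _ c2).
- by case: uU => ?; [case/negP: uU1 | case/negP: uU2].
Qed.

End Glue.

Lemma centered_decomp_glue U1 U2 v : separated e U1 U2 -> U1 :&: U2 \subset [set v] ->
  (v \in U1 -> v \in U2 -> noncut e U1 v /\ ~ noncut e (U1 :|: U2) v) ->
  centered_decomp U1 -> centered_decomp U2 -> centered_decomp (U1 :|: U2).
Proof.
move=> sep12 U12v vcut [I1 [t1 [B1 [ts1 tt1 dec1 w1 ok1]]]] [I2 [t2 [B2 [ts2 tt2 dec2 w2 ok2]]]].
have [y1 [y2 yv]] : exists y1 y2, v \in U1 -> v \in U2 ->
    v \in B1 y1 /\ centered_pw_le t2 (subtree B2 v) p.+1 y2.
  have [/andP [vU1 vU2]|nv] := boolP ((v \in U1) && (v \in U2)).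
    have [/set0Pn [y1 y1v] _] := dec1.2.2 v vU1.
    by have [[y2 c2] _] := ok2 v vU2; exists y1, y2; rewrite inE in y1v.
  have [[[/set0Pn [y1 _] _] _] [[/set0Pn [y2 _] _] _]] := (tt1, tt2).
  by exists y1, y2 => vU1 vU2; rewrite vU1 vU2 in nv.
have [[s1 _] [s2 _]] := (ts1, ts2).
exists (I1 + I2)%type, (glue t1 t2 y1 y2), (glue_bags B1 B2); split.
- exact: glue_simple.
- exact: glue_tree.
- apply: (glue_is_decomp sep12 U12v dec1 dec2) => // vU1 vU2.
  by have [y1v [n [f [_ y2v _]]]] := yv vU1 vU2; rewrite y1v; rewrite inE in y2v.
- by case=> [a|b]; [apply: w1 | apply: w2].
apply: (glue_centered_subtree y1 sep12 U12v dec1 dec2 ok1 ok2) => vU1 vU2.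
by have [_ c2] := yv vU1 vU2; have [ncut1 cut12] := vcut vU1 vU2.
Qed.

Section Induction.
Variable U : {set V}.
Hypothesis closedU : path_closed e U.
Hypothesis IH : forall W : {set V}, W \proper U -> path_closed e W -> centered_decomp W.

Lemma centered_decomp_split U1 U2 v : U1 :|: U2 = U -> U1 \proper U -> U2 \proper U ->
  separated e U1 U2 -> U1 :&: U2 \subset [set v] ->
  (v \in U1 -> v \in U2 -> noncut e U1 v /\ ~ noncut e U v) -> centered_decomp U.
Proof.
move=> UE U1U U2U sep12 U12v; have := closedU; rewrite -UE => closed12 vcut.
apply: (centered_decomp_glue sep12 U12v) => //; apply: IH => //.
  exact: path_closed_part sep12 U12v closed12.
rewrite setUC in closed12; rewrite setIC in U12v.
exact: path_closed_part (separated_sym se sep12) U12v closed12.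
Qed.

Lemma centered_decomp_disconnected a : a \in U -> component e U a != U -> centered_decomp U.
Proof.
move=> aU CU; set C := component e U a.
have CsubU : C \subset U := component_sub e U a.
have aC : a \in C := component_self e aU.
apply: (centered_decomp_split (U1 := C) (U2 := U :\: C) (v := a)).
- by rewrite -{2}(setID U C) (setIidPr CsubU).
- by rewrite properEneq CU CsubU.
- rewrite properEneq subsetDl andbT; apply/eqP => /setP /(_ a).
  by rewrite inE aC aU.
- by apply: separated_component; apply: subsetDl.
- by rewrite setDE setICA setICr setI0 sub0set.
- by move=> _; rewrite inE aC.
Qed.

Lemma centered_decomp_cut_vertex v a : v \in U -> a \in U :\ v ->
  component e (U :\ v) a != U :\ v -> centered_decomp U.
Proof.
move=> vU aUv CUv; set C := component e (U :\ v) a.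
have CsubUv : C \subset U :\ v := component_sub e (U :\ v) a.
have CsubU : C \subset U by apply: subset_trans CsubUv (subD1set U v).
have vC : v \notin C by apply/negP => /(subsetP CsubUv); rewrite !inE eqxx.
have aC : a \in C := component_self e aUv.
apply: (centered_decomp_split (U1 := v |: C) (U2 := U :\: C) (v := v)).
- rewrite -setUA -{2}(setID U C) (setIidPr CsubU); apply/setUidPr.
  by rewrite sub1set in_setU in_setD vU (negbTE vC).
- rewrite properEneq subUset sub1set vU CsubU /= andbT.
  by apply: (contraNneq _ CUv) => UE; apply/eqP; rewrite -[in RHS]UE setU1K.
- rewrite properEneq subsetDl andbT; apply/eqP => /setP /(_ a).
  by rewrite inE aC (subsetP CsubU).
- apply: (separated_component (X := U :\ v) (a := a)); apply/subsetP => x;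
    rewrite !in_setD ?in_setU1 ?in_setD1.
    by case/andP=> xUC /predU1P [xv|//]; move: xUC; rewrite xv vU vC.
  by rewrite -/C; case/and3P=> /norP [xv xC] _ xU; rewrite xC in_set1 xv xU.
- apply/subsetP => x; rewrite in_setI in_setU1 in_setD in_set1.
  by case/andP=> /predU1P [->|xC]; rewrite ?eqxx ?xC.
move=> _ _; split.
  by right; rewrite setU1K //; apply: component_connected.
case=> [Uv0|/component_of_connected /(_ aUv) /eqP]; last exact/negP.
by move/setP: Uv0 => /(_ a); rewrite aUv inE.
Qed.

End Induction.

Hypothesis ie : irreflexive e.
Hypothesis blocks_good : forall S : {set V}, block e S -> good_decomp e S w p.

Lemma centered_decomp_path_closed (U : {set V}) : path_closed e U -> centered_decomp U.
Proof.
have [n] := ubnP #|U|; elim: n U => // n IHn U Un closedU.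
have IH (W : {set V}) : W \proper U -> path_closed e W -> centered_decomp W.
  by move=> WU; apply: IHn; apply: leq_trans (proper_card WU) _; rewrite -ltnS.
have [U_le1|U_gt1] := leqP #|U| 1; first exact: centered_decomp_small.
have [/exists_inP [a aU CU]|connU] := boolP (disconnected e U).
  exact: (centered_decomp_disconnected closedU IH aU CU).
have U'0 u : u \in U -> U :\ u != set0.
  by move=> uU; rewrite -card_gt0 -(ltn_add2l (u \in U)) -cardsD1 uU.
have [/exists_inP [v vU /exists_inP [b bUv CUv]]|nocut] :=
  boolP [exists v in U, disconnected e (U :\ v)].
  exact: (centered_decomp_cut_vertex closedU IH vU bUv CUv).
apply/centered_decomp_of_good/blocks_good/block_of_path_closed => //.
  by apply: (connected_in_component se _ connU); rewrite -card_gt0 ltnW.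
move=> u uU; apply: (connected_in_component se (U'0 u uU)).
by move/exists_inPn: nocut; apply.
Qed.

End Decomposition.

Unset Implicit Arguments.

Theorem lemma14 (V : finType) (e : rel V) (w p : nat) :
  simple_graph e ->
  (forall S : {set V}, block e S -> good_decomp e S w p) ->
  good_decomp e [set: V] w p.+1.
Proof.
move=> [se ie] blocks_good.
have [I [te [B [tes tet dec Bw ok]]]] :=
  centered_decomp_path_closed se ie blocks_good (@path_closedT V e).
exists I, te, B; do 4 split=> //.
by move=> v vV; have [[c /centered_pw_le_pw_le]] := ok v vV.
Qed.
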